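(* Let $\alpha,q\in(-1,1)$ and $x\in H$ with $\|x\|=1$, and let $G_{\alpha,q}(x)=b_{\alpha,q}(x)+b^*_{\alpha,q}(x)$. Let $\mu$ be the distribution of $G_{\alpha,q}(x)$ with respect to the vacuum state, i.e. the probability measure on $\mathbb{R}$ with $\int t^n\,\mu(dt)=\langle\Omega,G_{\alpha,q}(x)^n\Omega\rangle_{\alpha,q}$ for all $n\ge0$. Then $\mu=\mathrm{qMP}_{\alpha\langle x,\bar x\rangle,q}$.
   Context: Let $H_\mathbb{R}$ be a real separable Hilbert space and $H$ its complexification, with inner product $\langle\cdot,\cdot\rangle$ linear in the second argument. Fix a self-adjoint involution $x\mapsto\bar x$ on $H$ (linear, $\bar{\bar x}=x$, $\langle\bar x,y\rangle=\langle x,\bar y\rangle$); then $\langle x,\bar x\rangle$ is real with $|\langle x,\bar x\rangle|\le\|x\|^2$. Let $\Sigma(n)$ be the group of bijections $\sigma$ of $\{\pm1,\dots,\pm n\}$ with $\sigma(-k)=-\sigma(k)$, generated by $\pi_0=(1,-1)$ and $\pi_i=(i,i+1)$, $1\le i\le n-1$; for $\sigma$ written as a reduced word, $l_1(\sigma)$ is the number of occurrences of $\pi_0$ and $l_2(\sigma)$ the number of occurrences of $\pi_i$, $i\ge1$. $\Sigma(n)$ acts on $H^{\otimes n}$ by $\pi_i$ swapping the $i$-th and $(i+1)$-th factors and $\pi_0(x_1\otimes\cdots\otimes x_n)=\overline{x_1}\otimes x_2\otimes\cdots\otimes x_n$. Set $P^{(n)}_{\alpha,q}=\sum_{\sigma\in\Sigma(n)}\alpha^{l_1(\sigma)}q^{l_2(\sigma)}\sigma$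 ($n\ge1$, $0^0=1$), $P^{(0)}_{\alpha,q}=\mathrm{id}$. Let $\mathcal F=\bigoplus_{n\ge0}H^{\otimes n}$ be the algebraic full Fock space, $H^{\otimes0}=\mathbb{C}\Omega$, with $\langle x_1\otimes\cdots\otimes x_m,y_1\otimes\cdots\otimes y_n\rangle_{0,0}=\delta_{m,n}\prod_i\langle x_i,y_i\rangle$ and $\langle f,g\rangle_{\alpha,q}=\langle f,P_{\alpha,q}g\rangle_{0,0}$, $P_{\alpha,q}=\bigoplus_nP^{(n)}_{\alpha,q}$ (an inner product for $\alpha,q\in(-1,1)$). The $(\alpha,q)$-creation operator is $b^*_{\alpha,q}(x)(x_1\otimes\cdots\otimes x_n)=x_1\otimes\cdots\otimes x_n\otimes x$, $b^*_{\alpha,q}(x)\Omega=x$, and $b_{\alpha,q}(x)$ is its adjoint with respect to $\langle\cdot,\cdot\rangle_{\alpha,q}$. For $a,q\in(-1,1)$, the $q$-Meixner–Pollaczek polynomials $P^{(a,q)}_n$ are the monic polynomials defined by $P^{(a,q)}_{-1}=0$, $P^{(a,q)}_0=1$, $tP^{(a,q)}_n(t)=P^{(a,q)}_{n+1}(t)+[n]_q(1+aq^{n-1})P^{(a,q)}_{n-1}(t)$ for $n\ge0$, where $[n]_q=1+q+\cdots+q^{n-1}$ ($[0]_q=0$); $\mathrm{qMP}_{a,q}$ denotes the (unique, compactly supported, absolutely continuous and supported in $[-2/\sqrt{1-q},2/\sqrt{1-q}]$) probability measure on $\mathbb{R}$ with respect to which these polynomials are orthogonal. *)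

From HB Require Import structures.
From mathcomp Require Import all_boot all_order all_algebra all_fingroup.
From mathcomp Require Import complex.
From mathcomp Require Import all_classical all_reals all_analysis.
From Stdlib Require Import ClassicalEpsilon.
Set Implicit Arguments. Unset Strict Implicit. Unset Printing Implicit Defensive.
Import Order.TTheory GRing.Theory Num.Theory.
Local Open Scope ring_scope.

Section Hilbert.
Variables (R : realType) (V : lmodType R[i]) (ip : V -> V -> R[i]).

Definition hnorm (x : V) : R := Num.sqrt (complex.Re (ip x x)).

Definition is_inner_product : Prop :=
  [/\ (forall x y z, ip x (y + z) = ip x y + ip x z),
      (forall (a : R[i]) x y, ip x (a *: y) = a * ip x y),
      (forall x y, ip x y = (ip y x)^*),
      (forall x, complex.Im (ip x x) = 0 /\ 0 <= complex.Re (ip x x))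
    & (forall x, ip x x = 0 -> x = 0)].

Definition is_complete : Prop :=
  forall u : nat -> V,
    (forall e : R, 0 < e -> exists N, forall m n, (N <= m)%N -> (N <= n)%N ->
        hnorm (u m - u n) < e) ->
    exists l : V, forall e : R, 0 < e -> exists N, forall n, (N <= n)%N ->
        hnorm (u n - l) < e.

Definition is_separable : Prop :=
  exists d : nat -> V, forall (x : V) (e : R), 0 < e ->
    exists k, hnorm (x - d k) < e.

(* H is the complexification of a real Hilbert space H_R: there is a
   conjugation J (antilinear isometric involution) whose fixed points are H_R *)
Definition is_complexification : Prop :=
  exists J : V -> V,
    [/\ (forall x y, J (x + y) = J x + J y),
        (forall (a : R[i]) x, J (a *: x) = a^* *: J x),
        (forall x, J (J x) = x)
      & (forall x y, ip (J x) (J y) = (ip x y)^*)].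

Definition complexified_separable_hilbert : Prop :=
  [/\ is_inner_product, is_complete, is_separable & is_complexification].

Definition selfadjoint_involution (bar : V -> V) : Prop :=
  [/\ (forall x y, bar (x + y) = bar x + bar y),
      (forall (a : R[i]) x, bar (a *: x) = a *: bar x),
      (forall x, bar (bar x) = x)
    & (forall x y, ip (bar x) y = ip x (bar y))].
End Hilbert.

(* sigma k = (j, s) encodes sigma(k+1) = -(j+1) if s, +(j+1) otherwise  *)
(* (values on the positive part determine sigma, as sigma(-k)=-sigma(k))*)
Definition sperm (n : nat) := {ffun 'I_n -> 'I_n * bool}.

(* bijectivity of sigma on {+-1..+-n} <-> injectivity of the absolute part *)
Definition Sigma (n : nat) : {set sperm n} :=
  [set s : sperm n | injectiveb (fun k => (s k).1)].

Definition sp_id (n : nat) : sperm n := [ffun k => (k, false)].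

Definition sp_comp n (s t : sperm n) : sperm n :=
  [ffun k => ((s (t k).1).1, addb (t k).2 (s (t k).1).2)].

(* generators: the ordinal 0 stands for pi_0 = (1,-1); the ordinal i>=1 for
   pi_i = (i, i+1), i.e. the transposition of the 0-based positions i-1, i *)
Definition pred_ord n (g : 'I_n) : 'I_n :=
  Ordinal (leq_ltn_trans (leq_pred g) (ltn_ord g)).

Definition sp_gen n (g : 'I_n) : sperm n :=
  if val g == 0%N then [ffun k => (k, val k == 0%N)]
  else [ffun k => (tperm (pred_ord g) g k, false)].

Definition sp_eval n (w : seq 'I_n) : sperm n :=
  foldr (fun g s => sp_comp (sp_gen g) s) (sp_id n) w.

Definition reduced_word n (w : seq 'I_n) (s : sperm n) : Prop :=
  sp_eval w = s /\ forall w', sp_eval w' = s -> (size w <= size w')%N.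

Definition sp_lengths n (s : sperm n) : nat * nat :=
  epsilon (inhabits (0%N, 0%N)) (fun l => exists w, reduced_word w s /\
     l = (count (fun g : 'I_n => val g == 0%N) w,
          count (fun g : 'I_n => val g != 0%N) w)).
Definition l1 n (s : sperm n) := (sp_lengths s).1.
Definition l2 n (s : sperm n) := (sp_lengths s).2.

(* A simple tensor x_1 (x) ... (x) x_n is represented by [:: x_1;..;x_n] *)
Section Fock.
Variables (R : realType) (V : lmodType R[i]) (ip : V -> V -> R[i])
          (bar : V -> V).

(* sigma.(v_1 (x) ... (x) v_n) has j-th factor v_k if sigma(k) = j and
   bar(v_k) if sigma(k) = -j; on generators: pi_i swaps factors i, i+1 and
   pi_0 applies bar to the first factor *)
Definition sp_act n (s : sperm n) (v : seq V) (j : 'I_n) : V :=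
  match [pick k | (s k).1 == j] with
  | Some k => if (s k).2 then bar (nth 0 v k) else nth 0 v k
  | None => 0
  end.

(* <u, P_{alpha,q} v>_{0,0} for simple tensors u, v *)
Definition form_simple (alpha q : R) (u v : seq V) : R[i] :=
  if size u == size v then
    \sum_(s in Sigma (size v))
       (alpha%:C)%C ^+ (l1 s) * (q%:C)%C ^+ (l2 s) *
       \prod_(j < size v) ip (nth 0 u j) (sp_act s v j)
  else 0.

(* algebraic full Fock space: finite formal linear combinations of simple
   tensors (Omega = the empty tensor) *)
Definition fock := seq (R[i] * seq V).

Definition fock_add (f g : fock) : fock := f ++ g.
Definition Omega : fock := [:: (1, [::])].

(* <f, g>_{alpha,q} = <f, P_{alpha,q} g>_{0,0}, antilinear in f *)
Definition form (alpha q : R) (f g : fock) : R[i] :=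
  \sum_(a <- f) \sum_(b <- g) (a.1)^* * b.1 * form_simple alpha q a.2 b.2.

Definition creation (x : V) (f : fock) : fock :=
  [seq (a.1, rcons a.2 x) | a <- f].

Definition is_annihilation (alpha q : R) (x : V) (b : fock -> fock) : Prop :=
  forall f g, form alpha q (b f) g = form alpha q f (creation x g).

Definition gaussian (b : fock -> fock) (x : V) (f : fock) : fock :=
  fock_add (b f) (creation x f).

Definition vacuum_moment (alpha q : R) (b : fock -> fock) (x : V) (n : nat)
  : R[i] := form alpha q Omega (iter n (gaussian b x) Omega).
End Fock.

Definition qint (R : ringType) (q : R) (n : nat) : R := \sum_(i < n) q ^+ i.

(* pair (P_n, P_{n+1}) *)
Fixpoint qMP_pair (R : comRingType) (a q : R) (n : nat) : {poly R} * {poly R} :=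
  match n with
  | 0 => (1, 'X)
  | m.+1 => let: (p0, p1) := qMP_pair a q m in
            (p1, 'X * p1 - (qint q m.+1 * (1 + a * q ^+ m)) *: p0)
  end.

Definition qMP_poly (R : comRingType) (a q : R) (n : nat) : {poly R} :=
  (qMP_pair a q n).1.

Definition is_qMP (R : realType) (a q : R) (mu : probability R R) : Prop :=
  (forall m n, mu.-integrable setT
      (fun t => ((qMP_poly a q m).[t] * (qMP_poly a q n).[t])%:E)) /\
  (forall m n, m != n ->
      (\int[mu]_t ((qMP_poly a q m).[t] * (qMP_poly a q n).[t])%:E = 0)%E).

(* The P_n are orthogonal for mu because P_n(G) Omega = x^(n), the n-th tensor power of x,
   and tensor powers of different degrees are orthogonal; so for m <> n the integral of P_m P_n,
   a linear combination of vacuum moments, is <P_m(G) Omega, P_n(G) Omega> = 0.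
   The identity P_n(G) Omega = x^(n) follows from the three-term recursion of the P_n once
   G x^(n+1) = x^(n+2) + c_n x^(n) with c_n = [n+1]_q (1 + a q^n), a = alpha <x, bar x>, holds
   weakly, i.e. <x^(n+1), w (x) x>_{alpha,q} = c_n <x^(n), w>_{alpha,q}. To get it, write a signed
   permutation of n+1 letters as one of n letters plus the value +-(j+1) given to the last position:
   l1 and l2 are identified with explicit statistics (number of negative signs, and a type-B
   inversion count), which grow by e and by n - j or n + j under the insertion, and the resulting
   weights sum to c_n. *)

From Pilot Require Import Defs.
From HB Require Import structures.
From mathcomp Require Import all_boot all_order all_algebra all_fingroup.
From mathcomp Require Import complex.
From mathcomp Require Import all_classical all_reals all_analysis.
From mathcomp Require Import zify ring lra.
From Stdlib Require Import ClassicalEpsilon.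
Set Implicit Arguments. Unset Strict Implicit. Unset Printing Implicit Defensive.
Import Order.TTheory GRing.Theory Num.Theory.

Section SignedPermutations.
Variable n : nat.
Implicit Types (s t : sperm n) (w : seq 'I_n).

Lemma SigmaP s : reflect (injective (fun k => (s k).1)) (s \in Sigma n).
Proof. by rewrite inE; apply: injectiveP. Qed.

Lemma Sigma_surj s j : s \in Sigma n -> exists k, (s k).1 = j.
Proof. by move=> /SigmaP /injF_onto /(_ j) /codomP [k ->]; exists k. Qed.

Lemma sp_compE s t k :
  sp_comp s t k = ((s (t k).1).1, addb (t k).2 (s (t k).1).2).
Proof. by rewrite ffunE. Qed.

Lemma sp_comp_Sigma s t : s \in Sigma n -> t \in Sigma n -> sp_comp s t \in Sigma n.
Proof.
by move=> /SigmaP hs /SigmaP ht; apply/SigmaP => k k'; rewrite !sp_compE => /hs /ht.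
Qed.

Lemma sp_compA s1 s2 s3 : sp_comp s1 (sp_comp s2 s3) = sp_comp (sp_comp s1 s2) s3.
Proof. by apply/ffunP => k; rewrite !sp_compE /= addbA. Qed.

Lemma sp_comp1s s : sp_comp (sp_id n) s = s.
Proof. by apply/ffunP => k; rewrite sp_compE !ffunE /= addbF; case: (s k). Qed.

Lemma sp_comps1 s : sp_comp s (sp_id n) = s.
Proof. by apply/ffunP => k; rewrite sp_compE !ffunE /=; case: (s k). Qed.

Lemma sp_id_Sigma : sp_id n \in Sigma n.
Proof. by apply/SigmaP => k k'; rewrite !ffunE. Qed.

Lemma sp_comp_gen0 (g : 'I_n) s k : val g = 0 ->
  sp_comp (sp_gen g) s k = ((s k).1, addb (s k).2 (val (s k).1 == 0)).
Proof. by move=> g0; rewrite sp_compE /sp_gen g0 eqxx !ffunE. Qed.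

Lemma sp_comp_genS (g : 'I_n) s k : val g != 0 ->
  sp_comp (sp_gen g) s k = (tperm (pred_ord g) g (s k).1, (s k).2).
Proof. by move=> g0; rewrite sp_compE /sp_gen (negbTE g0) !ffunE /= addbF. Qed.

Lemma sp_gen_Sigma (g : 'I_n) : sp_gen g \in Sigma n.
Proof.
apply/SigmaP => k k'; rewrite /sp_gen; case: ifP => _; rewrite !ffunE //=.
exact: perm_inj.
Qed.

Lemma sp_genK (g : 'I_n) s : sp_comp (sp_gen g) (sp_comp (sp_gen g) s) = s.
Proof.
apply/ffunP => k; have [/eqP g0 | g0] := boolP (val g == 0).
  by rewrite !sp_comp_gen0 //=; case: (s k) => a e /=; rewrite -addbA addbb addbF.
by rewrite !sp_comp_genS //= tpermK; case: (s k).
Qed.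

Lemma sp_eval_Sigma w : sp_eval w \in Sigma n.
Proof.
elim: w => [|g w IH] /=; first exact: sp_id_Sigma.
exact: sp_comp_Sigma (sp_gen_Sigma g) IH.
Qed.

Lemma sp_eval_cat w1 w2 : sp_eval (w1 ++ w2) = sp_comp (sp_eval w1) (sp_eval w2).
Proof. by elim: w1 => [|g w1 IH] /=; rewrite ?sp_comp1s // IH sp_compA. Qed.

Lemma pred_ordS (g : 'I_n) : val g != 0 -> val g = (val (pred_ord g)).+1.
Proof. by case: g => [[|m] ?]. Qed.

Lemma pred_ord_neq (g : 'I_n) : val g != 0 -> pred_ord g != g.
Proof. by rewrite -(inj_eq val_inj); case: g => [[|m] ?] //= _; rewrite ltn_eqF. Qed.

(* The position holding +-j; meaningful only for s in Sigma n. *)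
Definition sp_pos s (j : 'I_n) : 'I_n :=
  if [pick k | (s k).1 == j] is Some k then k else j.

Lemma sp_posK s j : s \in Sigma n -> (s (sp_pos s j)).1 = j.
Proof.
move=> sS; rewrite /sp_pos; case: pickP => [k /eqP //|none].
by have [k e] := Sigma_surj j sS; move: (none k); rewrite e eqxx.
Qed.

Lemma sp_pos_val s k : s \in Sigma n -> sp_pos s (s k).1 = k.
Proof. by move=> sS; apply: (SigmaP _ sS); rewrite sp_posK. Qed.

Definition nneg s : nat := \sum_k ((s k).2 : nat).

Definition inv_weight (k : 'I_n) (neg : bool) (k' : 'I_n) : nat :=
  if neg then (k' < k).+1 else (k < k' : nat).

(* A type-B inversion count: by l2E it is the number of pi_i (i >= 1) in a reduced word. *)
Definition ninv s : nat :=
  \sum_k \sum_k' (((s k').1 < (s k).1) * inv_weight k (s k).2 k').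

Lemma nneg_id : nneg (sp_id n) = 0.
Proof. by apply: big1 => k _; rewrite ffunE. Qed.

Lemma ninv_id : ninv (sp_id n) = 0.
Proof.
by apply: big1 => k _; apply: big1 => k' _; rewrite !ffunE /inv_weight /=; case: ltngtP.
Qed.

Lemma inv_weight_swap (k1 k2 : 'I_n) e1 e2 : k1 != k2 ->
  inv_weight k2 e2 k1 <= inv_weight k1 e1 k2 + 1.
Proof. by rewrite /inv_weight -(inj_eq val_inj) => ne; case: e1; case: e2; lia. Qed.

Lemma nneg_gen0 (g : 'I_n) s k0 : val g = 0 -> s \in Sigma n -> val (s k0).1 = 0 ->
  nneg (sp_comp (sp_gen g) s) + (s k0).2 = nneg s + ~~ (s k0).2.
Proof.
move=> g0 /SigmaP inj v0; rewrite /nneg (bigD1 k0) //= [in RHS](bigD1 k0) //=.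
rewrite sp_comp_gen0 // v0 eqxx addbT.
rewrite (eq_bigr (fun k => ((s k).2 : nat))); last first.
  move=> k kk0; rewrite sp_comp_gen0 //=; case: eqP => [e|]; last by rewrite addbF.
  by case/eqP: kk0; apply: inj; apply: val_inj; rewrite /= e v0.
by case: (s k0).2 => /=; lia.
Qed.

Lemma ninv_gen0 (g : 'I_n) s : val g = 0 -> ninv (sp_comp (sp_gen g) s) = ninv s.
Proof.
move=> g0; apply: eq_bigr => k _; apply: eq_bigr => k' _; rewrite !sp_comp_gen0 //=.
by case: eqP => [->|]; [rewrite ltn0 | rewrite addbF].
Qed.

Lemma nneg_genS (g : 'I_n) s : val g != 0 -> nneg (sp_comp (sp_gen g) s) = nneg s.
Proof. by move=> g0; apply: eq_bigr => k _; rewrite sp_comp_genS. Qed.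

End SignedPermutations.

Lemma sum2_exchange n (F F' : 'I_n -> 'I_n -> nat) (p1 p2 : 'I_n * 'I_n) :
  p1 != p2 -> (forall p, p != p1 -> p != p2 -> F' p.1 p.2 = F p.1 p.2) ->
  F' p1.1 p1.2 = 0 -> F p2.1 p2.2 = 0 ->
  \sum_k \sum_k' F' k k' + F p1.1 p1.2 = \sum_k \sum_k' F k k' + F' p2.1 p2.2.
Proof.
move=> ne12 eqF F'1 F2.
have split2 (G : 'I_n * 'I_n -> nat) :
    \sum_p G p = G p1 + G p2 + \sum_(p | (p != p1) && (p != p2)) G p.
  by rewrite (bigD1 p1) //= (bigD1 p2) 1?eq_sym //= addnA.
rewrite !pair_bigA (split2 (fun p => F' p.1 p.2)) (split2 (fun p => F p.1 p.2)) /= F'1 F2.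
rewrite (eq_bigr (fun p => F p.1 p.2)); last by move=> p /andP[]; apply: eqF.
lia.
Qed.

Lemma tperm_ltE n (a b u u' : 'I_n) : val b = (val a).+1 ->
  ~~ ((u == b) && (u' == a)) -> ~~ ((u == a) && (u' == b)) ->
  (tperm a b u' < tperm a b u) = (u' < u).
Proof.
move=> /= hb; rewrite -!(inj_eq val_inj).
case: tpermP => [->|->|/eqP ua /eqP ub]; case: tpermP => [->|->|/eqP u'a /eqP u'b];
  try move: ua ub; try move: u'a u'b; rewrite -?(inj_eq val_inj) /=; lia.
Qed.

Section Statistics.
Variable n : nat.
Implicit Types (s t : sperm n) (w : seq 'I_n).

(* pi_i only changes the relative order of the values at the positions k1, k2. *)
Lemma ninv_genS (g : 'I_n) s k1 k2 : val g != 0 -> s \in Sigma n ->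
  (s k1).1 = g -> (s k2).1 = pred_ord g ->
  ninv (sp_comp (sp_gen g) s) + inv_weight k1 (s k1).2 k2 =
  ninv s + inv_weight k2 (s k2).2 k1.
Proof.
move=> g0 /SigmaP inj v1 v2; have hb := pred_ordS g0.
have ne12 : k1 != k2 by apply: contra_neq (pred_ord_neq g0) => e; rewrite -v2 -v1 e.
pose F k k' := (((s k').1 < (s k).1) * inv_weight k (s k).2 k')%N.
pose F' k k' := (((sp_comp (sp_gen g) s k').1 < (sp_comp (sp_gen g) s k).1) *
   inv_weight k (sp_comp (sp_gen g) s k).2 k')%N.
have ltpg : (pred_ord g < g) = true by rewrite hb ltnSn.
have ltgp : (g < pred_ord g) = false by apply/negbTE; rewrite -leqNgt hb.
have E : \sum_k \sum_k' F' k k' + F k1 k2 = \sum_k \sum_k' F k k' + F' k2 k1.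
  apply: (@sum2_exchange _ F F' (k1, k2) (k2, k1)) => /=.
  - by rewrite xpair_eqE negb_and ne12.
  - move=> [k k'] /= h1 h2; rewrite /F /F' !sp_comp_genS //= tperm_ltE //.
    + apply/negP => /andP[/eqP e1 /eqP e2]; move: h1; rewrite xpair_eqE.
      by rewrite -(inj _ _ (etrans e1 (esym v1))) -(inj _ _ (etrans e2 (esym v2))) !eqxx.
    + apply/negP => /andP[/eqP e1 /eqP e2]; move: h2; rewrite xpair_eqE.
      by rewrite -(inj _ _ (etrans e1 (esym v2))) -(inj _ _ (etrans e2 (esym v1))) !eqxx.
  - by rewrite /F' !sp_comp_genS // v1 v2 tpermL tpermR ltgp.
  - by rewrite /F v1 v2 ltgp.
move: E; rewrite /F /F' !sp_comp_genS // v1 v2 tpermL tpermR ltpg !mul1n.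
by rewrite /ninv; under eq_bigr do under eq_bigr do rewrite sp_comp_genS //.
Qed.

Definition count0 w := count (fun g : 'I_n => val g == 0) w.
Definition countS w := count (fun g : 'I_n => val g != 0) w.

Lemma size_count0S w : size w = count0 w + countS w.
Proof. by rewrite /count0 /countS -(count_predC (fun g : 'I_n => val g == 0)). Qed.

Lemma stats_sp_eval_le w : nneg (sp_eval w) <= count0 w /\ ninv (sp_eval w) <= countS w.
Proof.
elim: w => [|g w [IH0 IHS]]; first by rewrite /= nneg_id ninv_id.
have sS := sp_eval_Sigma w; rewrite [sp_eval _]/=.
set s := sp_eval w in sS IH0 IHS *.
rewrite /count0 /countS /= -/(count0 w) -/(countS w).
have [/eqP g0 | g0] := boolP (val g == 0).
  have [k0 v0] := Sigma_surj g sS.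
  have := nneg_gen0 (k0 := k0) g0 sS; rewrite v0 g0 => /(_ erefl) E.
  by rewrite ninv_gen0 //; split; [move: E; case: (s k0).2 => /= E|]; lia.
have [k1 v1] := Sigma_surj g sS; have [k2 v2] := Sigma_surj (pred_ord g) sS.
have ne : k1 != k2 by apply: contra_neq (pred_ord_neq g0) => e; rewrite -v2 -v1 e.
have E := ninv_genS g0 sS v1 v2; have B := inv_weight_swap (s k1).2 (s k2).2 ne.
by rewrite nneg_genS //; split; lia.
Qed.

End Statistics.

Lemma incr_bounded_id n (f : nat -> nat) :
  (forall a, a < n -> f a < n) -> (forall a, a.+1 < n -> f a < f a.+1) ->
  forall a, a < n -> f a = a.
Proof.
move=> fn finc.
have ge a : a < n -> a <= f a.
  by elim: a => [|a IH] ha //; have := finc a ha; have := IH (ltnW ha); lia.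
have le d : d < n -> f (n.-1 - d) <= n.-1 - d.
  elim: d => [|d IH] hd; first by have := fn n.-1; rewrite subn0; lia.
  have := IH (ltnW hd); have := finc (n.-1 - d.+1).
  have -> : (n.-1 - d.+1).+1 = n.-1 - d by lia.
  by move=> /(_ ltac:(lia)); lia.
move=> a ha; have := ge a ha; have := le (n.-1 - a) ltac:(lia).
have -> : n.-1 - (n.-1 - a) = a by lia.
lia.
Qed.

Section ReducedWords.
Variable n : nat.
Implicit Types (s t : sperm n) (w : seq 'I_n).

Lemma sp_id_no_descent s : s \in Sigma n ->
  (forall k, val (s k).1 = 0 -> ~~ (s k).2) ->
  (forall k1 k2, val (s k1).1 != 0 -> (s k2).1 = pred_ord (s k1).1 ->
     inv_weight k1 (s k1).2 k2 <= inv_weight k2 (s k2).2 k1) ->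
  s = sp_id n.
Proof.
move=> sS no0 noS; have /SigmaP inj := sS.
have pos a k : val (s k).1 = a -> (s k).2 = false.
  elim: a k => [|a IH] k va; first exact/negbTE/no0.
  set k2 := sp_pos s (pred_ord (s k).1).
  have v2 : (s k2).1 = pred_ord (s k).1 by rewrite sp_posK.
  have := noS k k2 ltac:(by rewrite va) v2.
  by rewrite (IH k2) ?v2 /= ?va // /inv_weight; case: (s k).2 => //; lia.
pose f a := if insub a is Some j then val (sp_pos s (j : 'I_n)) else 0.
have fE (j : 'I_n) : f (val j) = sp_pos s j by rewrite /f valK.
have fn a : a < n -> f a < n by move=> ha; rewrite (fE (Ordinal ha)).
have finc a : a.+1 < n -> f a < f a.+1.
  move=> ha; have ha' : a < n by lia.
  rewrite (fE (Ordinal ha)) (fE (Ordinal ha')).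
  set k1 := sp_pos s (Ordinal ha); set k2 := sp_pos s (Ordinal ha').
  have v1 : (s k1).1 = Ordinal ha by rewrite sp_posK.
  have v2 : (s k2).1 = pred_ord (s k1).1 by rewrite sp_posK //; apply: val_inj; rewrite /= v1.
  have ne : k1 != k2 by apply/eqP => e; move: v2; rewrite -e v1 => /(congr1 val) /=; lia.
  have := noS k1 k2 ltac:(by rewrite v1) v2.
  rewrite /inv_weight (pos _ k1 erefl) (pos _ k2 erefl).
  by move: ne; rewrite -(inj_eq (@ord_inj _)); lia.
apply/ffunP => k; rewrite ffunE.
have := incr_bounded_id fn finc (ltn_ord (s k).1); rewrite fE sp_pos_val //.
by move: (pos _ k erefl); case: (s k) => j e /= -> vk; congr (_, _); apply: val_inj.
Qed.

Lemma sp_descent s : s \in Sigma n -> s != sp_id n ->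
  exists g : 'I_n, nneg s = (val g == 0) + nneg (sp_comp (sp_gen g) s) /\
                   ninv s = (val g != 0) + ninv (sp_comp (sp_gen g) s).
Proof.
move=> sS ns1.
have [/existsP [k /andP[/eqP v0 sk]] | no0] :=
  boolP [exists k, (val (s k).1 == 0) && (s k).2].
  exists (s k).1; rewrite v0 ninv_gen0 //.
  by have := nneg_gen0 (k0 := k) v0 sS v0; rewrite sk /= => E; split; lia.
have [/existsP [[k1 k2] /and3P [/= g0 /eqP v2 lt]] | noS] :=
  boolP [exists p : 'I_n * 'I_n, [&& val (s p.1).1 != 0,
   (s p.2).1 == pred_ord (s p.1).1 & inv_weight p.2 (s p.2).2 p.1 < inv_weight p.1 (s p.1).2 p.2]].
  exists (s k1).1; rewrite (negbTE g0) nneg_genS //.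
  have ne : k2 != k1 by apply: contra_neq (pred_ord_neq g0) => e; rewrite -v2 e.
  have := ninv_genS g0 sS erefl v2; have := inv_weight_swap (s k2).2 (s k1).2 ne.
  by split; lia.
case/eqP: ns1; apply: sp_id_no_descent => // [k v0 | k1 k2 g0 v2].
  by apply: contraNN no0 => sk; apply/existsP; exists k; rewrite v0 eqxx.
rewrite leqNgt; apply: contraNN noS => lt; apply/existsP.
by exists (k1, k2); rewrite /= g0 v2 eqxx lt.
Qed.

Lemma sp_word_stats s : s \in Sigma n ->
  exists w, [/\ sp_eval w = s, count0 w = nneg s & countS w = ninv s].
Proof.
move: {2}(nneg s + ninv s) (leqnn (nneg s + ninv s)) => m.
elim: m s => [|m IH] s hm sS; have [->|ns1] := eqVneq s (sp_id n);
  try by exists [::]; rewrite nneg_id ninv_id.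
all: have [g [E0 ES]] := sp_descent sS ns1.
  by move: E0 ES hm; case: (val g == 0) => /=; lia.
have [|w [ev c0 cS]] := IH _ _ (sp_comp_Sigma (sp_gen_Sigma g) sS).
  by move: E0 ES hm; case: (val g == 0) => /=; lia.
exists (g :: w); rewrite /= ev sp_genK /count0 /countS /= -/(count0 w) -/(countS w).
by rewrite c0 cS E0 ES.
Qed.

Lemma reduced_word_counts s w : s \in Sigma n -> reduced_word w s ->
  count0 w = nneg s /\ countS w = ninv s.
Proof.
move=> sS [ev min]; have [w0 [ev0 c0 cS]] := sp_word_stats sS.
have := min w0 ev0; rewrite !size_count0S c0 cS.
by have [] := stats_sp_eval_le w; rewrite ev; lia.
Qed.

Lemma sp_lengthsE s : s \in Sigma n -> sp_lengths s = (nneg s, ninv s).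
Proof.
move=> sS; rewrite /sp_lengths; set P := (fun l : nat * nat => _).
have : P (nneg s, ninv s).
  have [w0 [ev0 c0 cS]] := sp_word_stats sS.
  exists w0; split; last by rewrite -/(count0 w0) -/(countS w0) c0 cS.
  split=> // w' ev'; rewrite !size_count0S c0 cS.
  by have [] := stats_sp_eval_le w'; rewrite ev'; lia.
move=> /(ex_intro P) /(epsilon_spec (inhabits (0, 0))) [w [red ->]].
by have [c0 cS] := reduced_word_counts sS red; rewrite -/(count0 w) -/(countS w) c0 cS.
Qed.

Lemma l1E s : s \in Sigma n -> l1 s = nneg s.
Proof. by move=> sS; rewrite /l1 sp_lengthsE. Qed.

Lemma l2E s : s \in Sigma n -> l2 s = ninv s.
Proof. by move=> sS; rewrite /l2 sp_lengthsE. Qed.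

Definition sp_inv s : sperm n := [ffun j => (sp_pos s j, (s (sp_pos s j)).2)].

Lemma sp_inv_Sigma s : s \in Sigma n -> sp_inv s \in Sigma n.
Proof.
move=> sS; apply/SigmaP => j j'; rewrite !ffunE /= => e.
by rewrite -(sp_posK j sS) -(sp_posK j' sS) e.
Qed.

Lemma sp_invE s k : s \in Sigma n -> sp_inv s (s k).1 = (k, (s k).2).
Proof. by move=> sS; rewrite ffunE sp_pos_val. Qed.

Lemma sp_invK s : s \in Sigma n -> sp_inv (sp_inv s) = s.
Proof.
move=> sS; have iS := sp_inv_Sigma sS; apply/ffunP => k; rewrite [LHS]ffunE.
have -> : sp_pos (sp_inv s) k = (s k).1.
  by apply: (SigmaP _ iS); rewrite sp_posK // sp_invE.
by rewrite sp_invE //=; case: (s k).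
Qed.

Lemma sp_inv_unique s t : s \in Sigma n -> sp_comp t s = sp_id n -> t = sp_inv s.
Proof.
move=> sS e; apply/ffunP => j; rewrite ffunE.
have := congr1 (fun f : sperm n => f (sp_pos s j)) e.
rewrite /= sp_compE ffunE sp_posK //.
by case: (t j) => a b [-> /=]; case: b; case: (_ .2).
Qed.

Lemma sp_eval_rev w : sp_eval (rev w) = sp_inv (sp_eval w).
Proof.
apply: sp_inv_unique (sp_eval_Sigma w) _.
elim: w => [|g w IH]; first exact: sp_comps1.
by rewrite rev_cons -cats1 sp_eval_cat /= sp_comps1 -sp_compA sp_genK.
Qed.

(* A word for s read backwards is a word for its inverse, with the same counts. *)
Lemma stats_sp_inv s : s \in Sigma n ->
  nneg (sp_inv s) = nneg s /\ ninv (sp_inv s) = ninv s.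
Proof.
suff le t : t \in Sigma n -> nneg (sp_inv t) <= nneg t /\ ninv (sp_inv t) <= ninv t.
  move=> sS; have [h1 h2] := le _ sS; have [] := le _ (sp_inv_Sigma sS).
  by rewrite sp_invK //; split; lia.
move=> tS; have [w [ev c0 cS]] := sp_word_stats tS.
have [] := stats_sp_eval_le (rev w); rewrite sp_eval_rev ev.
by rewrite /count0 /countS !count_rev -/(count0 w) -/(countS w) c0 cS.
Qed.

End ReducedWords.

Lemma sum_ord_ltn m j : \sum_(u < m) (u < j : nat) = minn j m.
Proof.
elim: m => [|m IH]; first by rewrite big_ord0 minn0.
by rewrite big_ord_recr /= IH; case: (ltnP m j) => h; lia.
Qed.

Lemma sum_ord_geq m j : \sum_(u < m) (j <= u : nat) = m - minn j m.
Proof.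
elim: m => [|m IH]; first by rewrite big_ord0.
by rewrite big_ord_recr /= IH; case: (leqP j m) => h; lia.
Qed.

Section Insertion.
Variable n : nat.
Implicit Types (t : sperm n) (s : sperm n.+1).

(* Extend t to n+1 letters: the last position gets +-(j+1) with sign e, larger values shift up. *)
Definition sp_ins t (j : 'I_n.+1) (e : bool) : sperm n.+1 :=
  [ffun k => if unlift ord_max k is Some k' then (lift j (t k').1, (t k').2) else (j, e)].

Definition sp_del s : sperm n :=
  [ffun k => (if unlift (s ord_max).1 (s (lift ord_max k)).1 is Some u then u else k,
              (s (lift ord_max k)).2)].

Lemma sp_ins_max t j e : sp_ins t j e ord_max = (j, e).
Proof. by rewrite ffunE unlift_none. Qed.

Lemma sp_ins_lift t j e (k : 'I_n) :
  sp_ins t j e (lift ord_max k) = (lift j (t k).1, (t k).2).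
Proof. by rewrite ffunE liftK. Qed.

Lemma sp_ins_widen t j e (k : 'I_n) :
  sp_ins t j e (widen_ord (leqnSn n) k) = (lift j (t k).1, (t k).2).
Proof.
have -> : widen_ord (leqnSn n) k = lift ord_max k.
  by apply: val_inj; rewrite /= /bump; have := ltn_ord k; lia.
exact: sp_ins_lift.
Qed.

Lemma sp_ins_Sigma t j e : t \in Sigma n -> sp_ins t j e \in Sigma n.+1.
Proof.
move=> /SigmaP inj; apply/SigmaP => k1 k2.
case: (unliftP ord_max k1) => [k1'|] ->; case: (unliftP ord_max k2) => [k2'|] ->;
  rewrite ?sp_ins_max ?sp_ins_lift //=.
- by move=> /lift_inj /inj ->.
- by move=> e'; have := neq_lift j (t k1').1; rewrite e' eqxx.
- by move=> e'; have := neq_lift j (t k2').1; rewrite -e' eqxx.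
Qed.

Lemma sp_insK t j e : sp_del (sp_ins t j e) = t.
Proof. by apply/ffunP => k; rewrite ffunE sp_ins_max sp_ins_lift /= liftK; case: (t k). Qed.

Lemma sp_del_Sigma s : s \in Sigma n.+1 -> sp_del s \in Sigma n.
Proof.
move=> /SigmaP inj; apply/SigmaP => k1 k2; rewrite !ffunE /=.
have ne k : (s ord_max).1 != (s (lift ord_max k)).1.
  by apply/eqP => /inj /eqP; rewrite (negbTE (neq_lift _ _)).
case: (unliftP (s ord_max).1 (s (lift ord_max k1)).1) => [u1 e1|e1];
  last by move: (ne k1); rewrite e1 eqxx.
case: (unliftP (s ord_max).1 (s (lift ord_max k2)).1) => [u2 e2|e2];
  last by move: (ne k2); rewrite e2 eqxx.
by move=> eu; move: e1 e2; rewrite eu => <- /inj /lift_inj.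
Qed.

Lemma sp_delK s : s \in Sigma n.+1 -> sp_ins (sp_del s) (s ord_max).1 (s ord_max).2 = s.
Proof.
move=> /SigmaP inj; apply/ffunP => k.
case: (unliftP ord_max k) => [k'|] ->; last by rewrite sp_ins_max; case: (s ord_max).
rewrite sp_ins_lift ffunE /=.
case: (unliftP (s ord_max).1 (s (lift ord_max k')).1) => [u1 e1|e1].
  by rewrite -e1; case: (s _).
by move/inj: e1 => /eqP; rewrite eq_sym (negbTE (neq_lift _ _)).
Qed.

Lemma big_Sigma_ins (T : Type) (idx : T) (op : Monoid.com_law idx) (F : sperm n.+1 -> T) :
  \big[op/idx]_(s in Sigma n.+1) F s =
  \big[op/idx]_(j : 'I_n.+1) \big[op/idx]_(e : bool)
    \big[op/idx]_(t in Sigma n) F (sp_ins t j e).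
Proof.
rewrite (reindex (fun p : 'I_n.+1 * bool * sperm n => sp_ins p.2 p.1.1 p.1.2)).
  rewrite !pair_big_dep; apply: eq_bigl => -[[j e] t] /=.
  apply/idP/idP => [|]; last exact: sp_ins_Sigma.
  by rewrite -{2}(sp_insK t j e); apply: sp_del_Sigma.
exists (fun s => ((s ord_max).1, (s ord_max).2, sp_del s)).
  by move=> [[j e] t] _ /=; rewrite sp_insK sp_ins_max.
by move=> s sS; rewrite /= sp_delK.
Qed.

Lemma nneg_ins t j e : nneg (sp_ins t j e) = nneg t + e.
Proof.
rewrite /nneg big_ord_recr /= sp_ins_max; congr (_ + _).
by apply: eq_bigr => k _; rewrite sp_ins_widen.
Qed.

Lemma ninv_ins t j e : t \in Sigma n ->
  ninv (sp_ins t j e) = ninv t + (if e then n + j else n - j).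
Proof.
move=> /SigmaP inj.
have sum_values (P : 'I_n -> nat) : \sum_(k < n) P (t k).1 = \sum_(u < n) P u.
  by rewrite [RHS](reindex_inj inj).
have hj := ltn_ord j.
rewrite /ninv big_ord_recr /= big_ord_recr /= sp_ins_max ltnn mul0n addn0.
under eq_bigr => k _ do rewrite big_ord_recr /= sp_ins_widen sp_ins_max.
rewrite big_split /=.
have old_pairs : \sum_(k < n) \sum_(k' < n)
       ((sp_ins t j e (widen_ord (leqnSn n) k')).1 < bump j (t k).1) *
       inv_weight (widen_ord (leqnSn n) k) (t k).2 (widen_ord (leqnSn n) k') =
     \sum_(k < n) \sum_(k' < n) ((t k').1 < (t k).1) * inv_weight k (t k).2 k'.
  apply: eq_bigr => k _; apply: eq_bigr => k' _; rewrite sp_ins_widen /inv_weight /=.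
  by congr (_ * _); rewrite /bump; case: leqP; case: leqP => /=; lia.
have pairs_into_last : \sum_(k < n) (j < bump j (t k).1) *
     inv_weight (widen_ord (leqnSn n) k) (t k).2 ord_max = n - j.
  rewrite (eq_bigr (fun k => (j <= (t k).1 : nat))).
    by rewrite (sum_values (fun u => (j <= u : nat))) sum_ord_geq; lia.
  move=> k _; rewrite /inv_weight /=; have := ltn_ord k.
  by case: (t k).2; rewrite /bump; case: leqP => /=; lia.
have pairs_from_last : \sum_(k < n) ((sp_ins t j e (widen_ord (leqnSn n) k)).1 < j) *
    inv_weight ord_max e (widen_ord (leqnSn n) k) = if e then j + j else 0.
  rewrite (eq_bigr (fun k => if e then ((t k).1 < j : nat) * 2 else 0)).
    case: e {old_pairs}; last by rewrite big1.
    by rewrite -big_distrl /= (sum_values (fun u => (u < j : nat))) sum_ord_ltn; lia.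
  move=> k _; rewrite sp_ins_widen /inv_weight /=; have := ltn_ord k.
  by case: e {old_pairs}; rewrite /bump; case: leqP => /=; lia.
rewrite old_pairs pairs_into_last pairs_from_last.
by case: e {old_pairs pairs_from_last} => /=; lia.
Qed.

End Insertion.

Local Open Scope ring_scope.

Lemma conjC_realc (R : rcfType) (r : R) : ((r%:C)%C)^* = (r%:C)%C.
Proof. exact: conjc_real. Qed.

Lemma conjC_fixE (R : rcfType) (z : R[i]) : z^* = z -> z = ((complex.Re z)%:C)%C.
Proof.
case: z => a c /= /(congr1 (@complex.Im R)) /= e.
by have -> : c = 0 by lra.
Qed.

Section FockForm.
Variables (R : realType) (V : lmodType R[i]) (ip : V -> V -> R[i]) (bar : V -> V).
Hypothesis ipC : forall x y, ip x y = (ip y x)^*.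
Hypothesis barS : forall x y, ip (bar x) y = ip x (bar y).
Variables (alpha q : R).

Definition bar_if (e : bool) (y : V) := if e then bar y else y.

Lemma sp_act_val m (s : sperm m) (v : seq V) k : s \in Sigma m ->
  sp_act bar s v (s k).1 = bar_if (s k).2 (nth 0 v k).
Proof.
move=> /SigmaP inj; rewrite /sp_act; case: pickP => [k' /eqP /inj -> //|].
by move=> /(_ k); rewrite eqxx.
Qed.

Lemma prod_sp_act m (s : sperm m) (v : seq V) (F : 'I_m -> V -> R[i]) : s \in Sigma m ->
  \prod_(j < m) F j (sp_act bar s v j) =
  \prod_(k < m) F (s k).1 (bar_if (s k).2 (nth 0 v k)).
Proof.
move=> sS; rewrite (reindex_inj (SigmaP _ sS)).
by apply: eq_bigr => k _; rewrite sp_act_val.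
Qed.

Definition form_Sigma m (u v : seq V) : R[i] :=
  \sum_(s in Sigma m) (alpha%:C)%C ^+ (l1 s) * (q%:C)%C ^+ (l2 s) *
     \prod_(j < m) ip (nth 0 u j) (sp_act bar s v j).

Lemma form_simpleE u v : form_simple ip bar alpha q u v =
  if size u == size v then form_Sigma (size v) u v else 0.
Proof. by []. Qed.

(* sp_inv made involutive on all of sperm m, so that it can reindex a sum over Sigma m. *)
Definition sp_inv_ext m (s : sperm m) := if s \in Sigma m then sp_inv s else s.

Lemma sp_inv_extK m : involutive (@sp_inv_ext m).
Proof.
move=> s; rewrite /sp_inv_ext; have [sS|nsS] := boolP (s \in Sigma m).
  by rewrite sp_inv_Sigma // sp_invK.
by rewrite (negbTE nsS).
Qed.

Lemma sp_inv_ext_Sigma m (s : sperm m) : (sp_inv_ext s \in Sigma m) = (s \in Sigma m).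
Proof.
rewrite /sp_inv_ext; have [sS|nsS] := boolP (s \in Sigma m); last exact/negbTE.
exact: sp_inv_Sigma.
Qed.

(* Reindex by the inverse permutation, which has the same l1 and l2. *)
Lemma form_Sigma_conj m u v : (form_Sigma m u v)^* = form_Sigma m v u.
Proof.
rewrite /form_Sigma rmorph_sum [RHS](reindex_inj (can_inj (@sp_inv_extK m))).
apply: eq_big => [s|s sS]; first by rewrite sp_inv_ext_Sigma.
have iS := sp_inv_Sigma sS; have [eN eM] := stats_sp_inv sS.
rewrite /sp_inv_ext sS !l1E // !l2E // eN eM.
rewrite !rmorphM /= !rmorphXn /= !conjC_realc rmorph_prod /=; congr (_ * _).
under eq_bigr do rewrite -ipC.
rewrite (@prod_sp_act _ _ _ (fun j y => ip y (nth 0 u j))) //.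
rewrite (@prod_sp_act _ _ _ (fun j y => ip (nth 0 v j) y)) //.
rewrite [RHS](reindex_inj (SigmaP _ sS)); apply: eq_bigr => k _.
by rewrite sp_invE //=; case: (s k).2; rewrite /bar_if ?barS.
Qed.

Notation fm := (Defs.form ip bar alpha q).

Lemma form_simple_conj u v :
  (form_simple ip bar alpha q u v)^* = form_simple ip bar alpha q v u.
Proof.
rewrite !form_simpleE eq_sym; case: eqP => [e|_]; last by rewrite conjC0.
by rewrite form_Sigma_conj e.
Qed.

Lemma form_conj f g : (fm f g)^* = fm g f.
Proof.
rewrite /Defs.form rmorph_sum /= exchange_big /=; apply: eq_bigr => c _.
rewrite rmorph_sum /=; apply: eq_bigr => a _.
by rewrite !rmorphM /= conjCK form_simple_conj; ring.
Qed.

Lemma form_catl f f' g : fm (f ++ f') g = fm f g + fm f' g.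
Proof. by rewrite /Defs.form big_cat. Qed.

Lemma form_catr f g g' : fm f (g ++ g') = fm f g + fm f g'.
Proof. by rewrite /Defs.form -big_split; apply: eq_bigr => a _; rewrite big_cat. Qed.

End FockForm.

Lemma sum_expr_subn_addn (K : comNzRingType) (a q : K) n :
  \sum_(j < n.+1) (q ^+ (n - j) + a * q ^+ (n + j)) = qint q n.+1 * (1 + a * q ^+ n).
Proof.
rewrite big_split /= /qint mulrDr mulr1; congr (_ + _).
  rewrite (reindex_inj rev_ord_inj); apply: eq_bigr => j _.
  by congr (_ ^+ _); rewrite /=; have := ltn_ord j; lia.
by rewrite mulrC big_distrr; apply: eq_bigr => j _; rewrite exprD mulrA.
Qed.

Section VacuumRecursion.
Variables (R : realType) (V : lmodType R[i]) (ip : V -> V -> R[i]) (bar : V -> V).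
Hypothesis ipC : forall x y, ip x y = (ip y x)^*.
Hypothesis barS : forall x y, ip (bar x) y = ip x (bar y).
Variables (alpha q : R) (x : V).
Hypothesis hx : ip x x = 1.

Let a := complex.Re ((alpha%:C)%C * ip x (bar x)).

Definition qMP_coef n : R := qint q n.+1 * (1 + a * q ^+ n).

Lemma ip_bar_real y : ip y (bar y) = ((complex.Re (ip y (bar y)))%:C)%C.
Proof. by apply: conjC_fixE; rewrite -ipC barS. Qed.

Lemma qMP_paramE : (a%:C)%C = (alpha%:C)%C * ip x (bar x).
Proof. by rewrite /a [in RHS]ip_bar_real [in LHS]ip_bar_real -rmorphM. Qed.

(* Giving the last letter the value +-(j+1) costs q^(n-j) with sign +,
   and alpha <x, bar x> q^(n+j) with sign -. *)
Lemma qMP_coefE n : ((qMP_coef n)%:C)%C = \sum_(j < n.+1) \sum_(e : bool)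
  (alpha%:C)%C ^+ e * (q%:C)%C ^+ (if e then n + j else n - j)%N * ip x (bar_if bar e x).
Proof.
rewrite /qMP_coef rmorphM /= rmorphD /= rmorphM /= qMP_paramE rmorph1 rmorphXn /=.
have -> : ((qint q n.+1)%:C)%C = qint (q%:C)%C n.+1.
  by rewrite /qint rmorph_sum; apply: eq_bigr => i _; rewrite rmorphXn.
rewrite -sum_expr_subn_addn; apply: eq_bigr => j _.
by rewrite big_bool /= hx expr1 expr0 mulr1 mul1r addrC mulrAC.
Qed.

Definition ip_x_prod m (w : seq V) (s : sperm m) :=
  \prod_(k < m) ip x (bar_if bar (s k).2 (nth 0 w k)).

Lemma form_Sigma_nseq m w : form_Sigma ip bar alpha q m (nseq m x) w =
  \sum_(s in Sigma m) (alpha%:C)%C ^+ (nneg s) * (q%:C)%C ^+ (ninv s) * ip_x_prod w s.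
Proof.
apply: eq_bigr => s sS; rewrite l1E // l2E //; congr (_ * _).
rewrite (@prod_sp_act _ _ _ _ _ _ (fun j y => ip (nth 0 (nseq m x) j) y)) //.
by apply: eq_bigr => k _; rewrite nth_nseq ltn_ord.
Qed.

Lemma ip_x_prod_ins n w (t : sperm n) j e : size w = n ->
  ip_x_prod (rcons w x) (sp_ins t j e) = ip_x_prod w t * ip x (bar_if bar e x).
Proof.
move=> sw; rewrite /ip_x_prod big_ord_recr /= sp_ins_max nth_rcons sw ltnn eqxx.
by congr (_ * _); apply: eq_bigr => k _; rewrite sp_ins_widen nth_rcons sw ltn_ord.
Qed.

Lemma form_Sigma_nseq_rcons n w : size w = n ->
  form_Sigma ip bar alpha q n.+1 (nseq n.+1 x) (rcons w x) =
  ((qMP_coef n)%:C)%C * form_Sigma ip bar alpha q n (nseq n x) w.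
Proof.
move=> sw; rewrite !form_Sigma_nseq big_Sigma_ins qMP_coefE big_distrl /=.
apply: eq_bigr => j _; rewrite big_distrl /=; apply: eq_bigr => e _.
rewrite mulr_sumr; apply: eq_bigr => t tS.
rewrite nneg_ins ninv_ins // (ip_x_prod_ins _ _ _ sw) !exprD.
move: (alpha%:C%C ^+ nneg t) (alpha%:C%C ^+ e) (q%:C%C ^+ ninv t) (q%:C%C ^+ _)
  (ip_x_prod w t) (ip x _) => a1 a2 a3 a4 a5 a6; ring.
Qed.

End VacuumRecursion.

Section Moments.
Variables (R : realType) (V : lmodType R[i]) (ip : V -> V -> R[i]) (bar : V -> V).
Hypothesis ipC : forall x y, ip x y = (ip y x)^*.
Hypothesis barS : forall x y, ip (bar x) y = ip x (bar y).
Variables (alpha q : R) (x : V).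
Hypothesis hx : ip x x = 1.
Variable b : fock V -> fock V.
Hypothesis hb : is_annihilation ip bar alpha q x b.

Notation fm := (Defs.form ip bar alpha q).
Notation fs := (form_simple ip bar alpha q).
Notation G := (gaussian b x).
Notation c := (qMP_coef ip bar alpha q x).
Local Notation Omega := (@Defs.Omega R V).
Implicit Types (p r : {poly R}) (f g : fock V).

Lemma annihilation_adjr f g : fm f (b g) = fm (creation x f) g.
Proof. by rewrite -(form_conj ipC barS) hb form_conj. Qed.

Lemma gaussian_sym f g : fm (G f) g = fm f (G g).
Proof.
by rewrite /gaussian /fock_add form_catl form_catr hb annihilation_adjr addrC.
Qed.

Definition tensor_pow k : fock V := [:: (1, nseq k x)].

Lemma form_tensor_pow k g : fm (tensor_pow k) g = \sum_(a <- g) a.1 * fs (nseq k x) a.2.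
Proof.
rewrite /Defs.form big_cons big_nil addr0.
by apply: eq_bigr => a _; rewrite conjC1 mul1r.
Qed.

Lemma form_tensor_pow_neq m n : m != n -> fm (tensor_pow m) (tensor_pow n) = 0.
Proof.
move=> ne; rewrite form_tensor_pow big_cons big_nil addr0 form_simpleE !size_nseq.
by rewrite (negbTE ne) mulr0.
Qed.

Lemma form_simple_nseq_rcons k w :
  fs (nseq k.+1 x) (rcons w x) = (c k)%:C%C * fs (nseq k x) w.
Proof.
rewrite !form_simpleE !size_nseq size_rcons eqSS.
case: eqP => [e|]; last by rewrite mulr0.
by rewrite e (form_Sigma_nseq_rcons ipC barS alpha q hx (erefl (size w))).
Qed.

Lemma annihilation_tensor_pow k g :
  fm (b (tensor_pow k.+1)) g = (c k)%:C%C * fm (tensor_pow k) g.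
Proof.
rewrite hb !form_tensor_pow /creation big_map big_distrr /=.
by apply: eq_bigr => a _; rewrite form_simple_nseq_rcons; ring.
Qed.

Lemma annihilation_Omega g : fm (b Omega) g = 0.
Proof.
rewrite hb (form_tensor_pow 0) /creation big_map; apply: big1 => a _.
by rewrite form_simpleE size_rcons mulr0.
Qed.

Lemma gaussian_tensor_pow k g :
  fm (G (tensor_pow k.+1)) g = fm (tensor_pow k.+2) g + (c k)%:C%C * fm (tensor_pow k) g.
Proof.
have rcons_nseq j : rcons (nseq j x) x = nseq j.+1 x by elim: j => //= j ->.
by rewrite /gaussian /fock_add form_catl annihilation_tensor_pow addrC /= rcons_nseq.
Qed.

Lemma gaussian_Omega g : fm (G Omega) g = fm (tensor_pow 1) g.
Proof. by rewrite /gaussian /fock_add form_catl annihilation_Omega add0r. Qed.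

Lemma form_iter_gaussian i j :
  fm (iter i G Omega) (iter j G Omega) = fm Omega (iter (i + j) G Omega).
Proof. by elim: i j => [|i IH] j //=; rewrite gaussian_sym -(iterS j) IH addnS. Qed.

Definition poly_form (p : {poly R}) (g : fock V) : R[i] :=
  \sum_(i < size p) ((p`_i)%:C)%C * fm (iter i G Omega) g.

Lemma poly_form_widen N p g : (size p <= N)%N ->
  poly_form p g = \sum_(i < N) ((p`_i)%:C)%C * fm (iter i G Omega) g.
Proof.
move=> hN; rewrite /poly_form.
rewrite (big_ord_widen N (fun i => ((p`_i)%:C)%C * fm (iter i G Omega) g)) //.
rewrite big_mkcond /=; apply: eq_bigr => i _; case: ifP => // /negbT.
by rewrite -leqNgt => /(nth_default 0) ->; rewrite rmorph0 mul0r.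
Qed.

Lemma poly_formD p r g : poly_form (p + r) g = poly_form p g + poly_form r g.
Proof.
set N := maxn (size p) (size r).
rewrite !(poly_form_widen (N := N)) ?leq_maxl ?leq_maxr ?(leq_trans (size_polyD _ _)) //.
by rewrite -big_split; apply: eq_bigr => i _; rewrite coefD rmorphD mulrDl.
Qed.

Lemma poly_formZ a p g : poly_form (a *: p) g = (a%:C)%C * poly_form p g.
Proof.
rewrite (poly_form_widen (N := size p)) ?size_scale_leq // /poly_form big_distrr /=.
by apply: eq_bigr => i _; rewrite coefZ rmorphM mulrA.
Qed.

Lemma poly_formXM p g : poly_form ('X * p) g = poly_form p (G g).
Proof.
rewrite (poly_form_widen (N := (size p).+1)); last first.
  by apply: leq_trans (size_polyMleq _ _) _; rewrite size_polyX.
rewrite big_ord_recl coefXM eqxx rmorph0 mul0r add0r.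
by apply: eq_bigr => i _; rewrite coefXM /= -gaussian_sym.
Qed.

Lemma poly_form1 g : poly_form 1 g = fm Omega g.
Proof. by rewrite /poly_form size_poly1 big_ord1 coefC /= rmorph1 mul1r. Qed.

Lemma poly_form_sum N (F : 'I_N -> {poly R}) g :
  poly_form (\sum_(i < N) F i) g = \sum_(i < N) poly_form (F i) g.
Proof.
elim: N F => [|N IH] F; first by rewrite !big_ord0 /poly_form size_poly0 big_ord0.
by rewrite !big_ord_recr /= poly_formD IH.
Qed.

Lemma poly_formMXn p j g : poly_form (p * 'X^j) g = poly_form p (iter j G g).
Proof.
elim: j g => [|j IH] g; first by rewrite expr0 mulr1.
by rewrite exprS mulrCA poly_formXM IH iterSr.
Qed.

Lemma poly_formM p r g :
  poly_form (p * r) g = \sum_(j < size r) ((r`_j)%:C)%C * poly_form p (iter j G g).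
Proof.
rewrite -{1}(coefK r) poly_def mulr_sumr poly_form_sum; apply: eq_bigr => j _.
by rewrite -scalerAr poly_formZ poly_formMXn.
Qed.

Let a := complex.Re ((alpha%:C)%C * ip x (bar x)).

(* The three-term recursion of the P_n is the one of G on the tensor powers of x. *)
Lemma poly_form_qMP n : (forall g, poly_form (qMP_pair a q n).1 g = fm (tensor_pow n) g) /\
                        (forall g, poly_form (qMP_pair a q n).2 g = fm (tensor_pow n.+1) g).
Proof.
elim: n => [|n [IH0 IH1]].
  split=> g /=; first exact: poly_form1.
  by rewrite -[X in poly_form X]mulr1 poly_formXM poly_form1 -gaussian_sym gaussian_Omega.
move: IH0 IH1; rewrite /=; case: (qMP_pair a q n) => p0 p1 /= IH0 IH1.
split=> g //=; rewrite -scaleNr poly_formD poly_formZ poly_formXM IH1 -gaussian_sym.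
by rewrite gaussian_tensor_pow IH0 rmorphN mulNr addrK.
Qed.

Lemma poly_form_qMP_orth m n : m != n ->
  poly_form (qMP_poly a q m * qMP_poly a q n) Omega = 0.
Proof.
move=> ne; rewrite poly_formM.
have [Pm _] := poly_form_qMP m; have [Pn _] := poly_form_qMP n.
transitivity ((poly_form (qMP_poly a q n) (tensor_pow m))^*).
  rewrite [in RHS]/poly_form rmorph_sum; apply: eq_bigr => j _.
  by rewrite /qMP_poly Pm rmorphM /= conjC_realc (form_conj ipC barS).
by rewrite /qMP_poly Pn form_tensor_pow_neq 1?eq_sym // conjC0.
Qed.

Lemma poly_form_Omega p :
  poly_form p Omega = \sum_(i < size p) ((p`_i)%:C)%C * vacuum_moment ip bar alpha q b x i.
Proof.
apply: eq_bigr => i _; rewrite /vacuum_moment.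
by have := form_iter_gaussian i 0; rewrite addn0 /= => ->.
Qed.

End Moments.

Section PolyIntegral.
Variables (R : realType) (mu : probability R R).
Hypothesis int_pow : forall n : nat, mu.-integrable setT (fun t : R => (t ^+ n)%:E).

Let moment i : R := fine (\int[mu]_t (t ^+ i)%:E).

Lemma integral_sum_monomials N (c : nat -> R) :
  mu.-integrable setT (fun t => (\sum_(i < N) c i * t ^+ i)%:E) /\
  (\int[mu]_t (\sum_(i < N) c i * t ^+ i)%:E = (\sum_(i < N) c i * moment i)%:E)%E.
Proof.
elim: N => [|N [IHint IHval]].
  under eq_fun do rewrite big_ord0.
  by rewrite big_ord0; split; [exact: integrable0 | exact: integral0].
have -> : (fun t : R => (\sum_(i < N.+1) c i * t ^+ i)%:E) =
    ((fun t => (\sum_(i < N) c i * t ^+ i)%:E) \+ (fun t => (c N)%:E * (t ^+ N)%:E))%E.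
  by apply/funext => t; rewrite big_ord_recr /= EFinD EFinM.
have intN : mu.-integrable setT (fun t => ((c N)%:E * (t ^+ N)%:E)%E).
  exact: integrableZl.
split; first exact: integrableD.
rewrite integralD // IHval integralZl // big_ord_recr /= EFinD EFinM.
by rewrite /moment fineK //; apply: integrable_fin_num.
Qed.

Lemma integral_poly (p : {poly R}) :
  mu.-integrable setT (fun t => (p.[t])%:E) /\
  (\int[mu]_t (p.[t])%:E = (\sum_(i < size p) p`_i * moment i)%:E)%E.
Proof. by under eq_fun do rewrite horner_coef; apply: integral_sum_monomials. Qed.

End PolyIntegral.

Theorem mainTheorem7 (R : realType) (V : lmodType R[i]) (ip : V -> V -> R[i])
  (bar : V -> V) (alpha q : R) (x : V) (b : fock V -> fock V)
  (mu : probability R R) :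
  complexified_separable_hilbert ip ->
  selfadjoint_involution ip bar ->
  -1 < alpha < 1 -> -1 < q < 1 ->
  ip x x = 1 ->
  is_annihilation ip bar alpha q x b ->
  (forall n : nat,
      mu.-integrable setT (fun t : R => (t ^+ n)%:E) /\
      ((fine (\int[mu]_t (t ^+ n)%:E))%:C)%C = vacuum_moment ip bar alpha q b x n) ->
  is_qMP (complex.Re ((alpha%:C)%C * ip x (bar x))) q mu.
Proof.
move=> [[_ _ ipC _ _] _ _ _] [_ _ _ barS] _ _ hx hb hmom.
have int_pow n := proj1 (hmom n).
set a := complex.Re _; split=> m n.
  under eq_fun do rewrite -hornerM.
  exact: (integral_poly int_pow _).1.
move=> ne; under eq_integral do rewrite -hornerM.
rewrite (proj2 (integral_poly int_pow _)); congr (_%:E).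
have := poly_form_qMP_orth ipC barS hx hb ne; rewrite (poly_form_Omega ipC barS hb).
under eq_bigr do rewrite -(proj2 (hmom _)) -rmorphM.
by rewrite -rmorph_sum => /(congr1 (@complex.Re R)) /=.
Qed.
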